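(* Let $d,s\in\mathbb{N}_{\ge1}$, let $\boldsymbol\alpha\in\mathbb{N}_{\ge0}^d$ with $\sum_{i=1}^d\alpha_i=\bar\alpha$, and write $a:=\lceil\log_2\bar\alpha\rceil$. For any $0<\epsilon\le\frac{3^{a}-1}{3^{a-1}-1}$ (read as $+\infty$ when $3^{a-1}-1=0$), there exists a ReLU FNN function $f^{(mnm)}_{FF}:\mathbb{R}^d\to\mathbb{R}$ with width $21\cdot2^{a-1}$, depth $C\ln\frac{3^{a}-1}{2\epsilon}$ and weight bound $C$, where $C$ is a constant independent of $\epsilon$, such that for all $\boldsymbol x\in[0,1]^d$, $$|f^{(mnm)}_{FF}(\boldsymbol x)-x_1^{\alpha_1}x_2^{\alpha_2}\cdots x_d^{\alpha_d}|\le\epsilon.$$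
   Context: ReLU FNN of depth $L$, width $W$: $f_0=x$, $f_l=\sigma_R(W_lf_{l-1}+b_l)$ ($1\le l\le L-1$), $f=W_Lf_{L-1}+b_L$ with hidden layers of width $W$, $\sigma_R(x)=\max\{x,0\}$; the weight bound is the maximum absolute value of all weights and biases. *)

From Stdlib Require Import Reals Lra Lia.
Open Scope R_scope.

Definition relu (x : R) : R := Rmax x 0.

Fixpoint rsum (n : nat) (f : nat -> R) : R :=
  match n with
  | O => 0
  | S k => rsum k f + f k
  end.

(* A ReLU FNN with input dimension d, hidden width W, depth L is given by
   weights  wt l i j  (layer l = 1..L, row i, column j) and biases  bs l i.
   Layer l has input dimension d if l = 1 and W otherwise, and output
   dimension 1 if l = L and W otherwise. Entries outside these ranges are
   never used. *)
Definition in_dim (d W l : nat) : nat := if Nat.eqb l 1 then d else W.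
Definition out_dim (W L l : nat) : nat := if Nat.eqb l L then 1%nat else W.

Fixpoint hidden (d W : nat) (wt : nat -> nat -> nat -> R) (bs : nat -> nat -> R)
  (x : nat -> R) (l : nat) : nat -> R :=
  match l with
  | O => x
  | S k => fun i =>
      relu (rsum (in_dim d W (S k)) (fun j => wt (S k) i j * hidden d W wt bs x k j)
            + bs (S k) i)
  end.

Definition realize (d W L : nat) (wt : nat -> nat -> nat -> R) (bs : nat -> nat -> R)
  (x : nat -> R) : R :=
  rsum (in_dim d W L) (fun j => wt L O j * hidden d W wt bs x (L - 1) j) + bs L O.

Definition weight_bounded (d W L : nat) (wt : nat -> nat -> nat -> R)
  (bs : nat -> nat -> R) (B : R) : Prop :=
  forall l, (1 <= l <= L)%nat ->
    forall i, (i < out_dim W L l)%nat ->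
      Rabs (bs l i) <= B /\
      forall j, (j < in_dim d W l)%nat -> Rabs (wt l i j) <= B.

Fixpoint nsum (n : nat) (f : nat -> nat) : nat :=
  match n with O => O | S k => (nsum k f + f k)%nat end.

Fixpoint monomial (n : nat) (alpha : nat -> nat) (x : nat -> R) : R :=
  match n with O => 1 | S k => monomial k alpha x * x k ^ alpha k end.

Definition eps_admissible (a : nat) (eps : R) : Prop :=
  0 < eps /\
  (3 ^ (a - 1) - 1 <> 0 -> eps <= (3 ^ a - 1) / (3 ^ (a - 1) - 1)).

From Stdlib Require Import Reals Lra Lia ZArith List.
Import ListNotations.
Open Scope R_scope.

(* Write x^alpha as the product F_0 F_1 ... F_(K-1) of K = |alpha| coordinates, with
   repetitions.  K neurons pass the factors through unchanged, and the partial products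
   are built one factor at a time.  A product p z of numbers in [0,1] comes from
   polarization, p z = 2 ((p+z)/2)^2 - 2 (p/2)^2 - 2 (z/2)^2, where each square is
   replaced by Yarotsky's approximation u - sum_(k <= m) g^k(u) / 4^k (g the hat
   function), whose error lies in [0, 4^-(m+1)].  The result is clamped to [0,1] as
   relu v - relu (v - 1), which does not increase the error.  One multiplication takes
   m + 2 layers and 11 extra neurons, the errors add up to (K-1) 4^-m, and m ~ ln (K/eps)
   gives depth O(ln (1/eps)) with constant weights. *)

Lemma relu_of_nonneg x : 0 <= x -> relu x = x.
Proof. intros; unfold relu; apply Rmax_left; lra. Qed.

Lemma relu_of_nonpos x : x <= 0 -> relu x = 0.
Proof. intros; unfold relu; apply Rmax_right; lra. Qed.

Lemma rsum_ext n f g : (forall j, (j < n)%nat -> f j = g j) -> rsum n f = rsum n g.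
Proof.
  induction n as [|n IH]; intros Hfg; simpl; [reflexivity|].
  rewrite IH, Hfg; [reflexivity | lia | intros; apply Hfg; lia].
Qed.

Lemma rsum_plus n f g : rsum n (fun j => f j + g j) = rsum n f + rsum n g.
Proof. induction n as [|n IH]; simpl; [lra | rewrite IH; ring]. Qed.

Lemma rsum_0 n : rsum n (fun _ => 0) = 0.
Proof. induction n as [|n IH]; simpl; [|rewrite IH]; lra. Qed.

Lemma rsum_delta n c w h : (c < n)%nat ->
  rsum n (fun j => (if Nat.eqb j c then w else 0) * h j) = w * h c.
Proof.
  induction n as [|n IH]; intros Hc; [lia|]; simpl.
  destruct (Nat.eqb_spec n c) as [<-|Hnc].
  - rewrite (rsum_ext _ _ (fun _ => 0)), rsum_0; [ring|].
    intros j Hj; destruct (Nat.eqb_spec j n); [lia | ring].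
  - rewrite IH by lia; ring.
Qed.

Definition sform := list (R * nat).

Definition sform_coef (f : sform) (j : nat) : R :=
  fold_right (fun t c => (if Nat.eqb j (snd t) then fst t else 0) + c) 0 f.

Definition sform_eval (f : sform) (h : nat -> R) : R :=
  fold_right (fun t c => fst t * h (snd t) + c) 0 f.

Definition sform_norm1 (f : sform) : R :=
  fold_right (fun t c => Rabs (fst t) + c) 0 f.

Lemma rsum_sform_coef n f h : (forall t, In t f -> (snd t < n)%nat) ->
  rsum n (fun j => sform_coef f j * h j) = sform_eval f h.
Proof.
  induction f as [|[w c] f IH]; intros Hf; simpl.
  - rewrite (rsum_ext _ _ (fun _ => 0)), rsum_0 by (intros; ring); reflexivity.
  - rewrite (rsum_ext _ _ (fun j => (if Nat.eqb j c then w else 0) * h j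
                                    + sform_coef f j * h j)) by (intros; ring).
    rewrite rsum_plus, rsum_delta, IH; [reflexivity | |].
    + intros t Ht; apply Hf; simpl; auto.
    + apply (Hf (w, c)); simpl; auto.
Qed.

Lemma sform_coef_bound f j : Rabs (sform_coef f j) <= sform_norm1 f.
Proof.
  induction f as [|[w c] f IH]; simpl.
  - rewrite Rabs_R0; lra.
  - eapply Rle_trans; [apply Rabs_triang|].
    destruct (Nat.eqb j c); [|rewrite Rabs_R0; pose proof (Rabs_pos w)]; lra.
Qed.

Definition sparse_layer (row : nat -> sform) (bias : nat -> R) (h : nat -> R) (i : nat) : R :=
  relu (sform_eval (row i) h + bias i).

Section SparseNetwork.

Variables (d W L : nat) (row : nat -> nat -> sform) (bias : nat -> nat -> R).

Let wt l i j := sform_coef (row l i) j.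

Hypothesis row_support : forall l i t, In t (row l i) -> (snd t < in_dim d W l)%nat.

Lemma hidden_succ x l i :
  hidden d W wt bias x (S l) i = sparse_layer (row (S l)) (bias (S l)) (hidden d W wt bias x l) i.
Proof. simpl; unfold sparse_layer, wt; rewrite rsum_sform_coef; [reflexivity | apply row_support]. Qed.

Lemma realize_sparse x :
  realize d W L wt bias x = sform_eval (row L 0) (hidden d W wt bias x (L - 1)) + bias L 0.
Proof. unfold realize, wt; rewrite rsum_sform_coef; [reflexivity | apply row_support]. Qed.

Lemma weight_bounded_sparse B :
  (forall l i, Rabs (bias l i) <= B /\ sform_norm1 (row l i) <= B) ->
  weight_bounded d W L wt bias B.
Proof.
  intros Hb l _ i _; split; [apply Hb|].
  intros j _; eapply Rle_trans; [apply sform_coef_bound | apply Hb].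
Qed.

End SparseNetwork.

Definition hat (y : R) : R := 2 * relu y - 4 * relu (y - 1/2).

Fixpoint sawtooth (u : R) (s : nat) : R :=
  match s with O => u | S k => hat (sawtooth u k) end.

Fixpoint sq_approx (u : R) (s : nat) : R :=
  match s with O => u | S k => sq_approx u k - sawtooth u (S k) * (/4) ^ S k end.

Lemma hat_spec y : 0 <= y <= 1 ->
  0 <= hat y <= 1 /\ y * (1 - y) = (hat y + hat y * (1 - hat y)) / 4.
Proof.
  intros Hy; unfold hat; destruct (Rle_lt_dec y (1/2)).
  - rewrite (relu_of_nonneg y), (relu_of_nonpos (y - 1/2)) by lra; split; [lra | field].
  - rewrite (relu_of_nonneg y), (relu_of_nonneg (y - 1/2)) by lra; split; [lra | field].
Qed.

Lemma sq_approx_spec u s : 0 <= u <= 1 ->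
  0 <= sawtooth u s <= 1 /\
  sq_approx u s = u * u + sawtooth u s * (1 - sawtooth u s) * (/4) ^ s.
Proof.
  intros Hu; induction s as [|s [Hg IH]]; simpl.
  - split; [lra | ring].
  - destruct (hat_spec _ Hg) as [Hh Hid]; split; [exact Hh|].
    rewrite IH, Hid; simpl pow; field.
Qed.

Lemma sq_approx_err u s : 0 <= u <= 1 -> 0 <= sq_approx u s - u * u <= (/4) ^ s / 4.
Proof.
  intros Hu; destruct (sq_approx_spec u s Hu) as [Hg ->].
  assert (Hq : 0 < (/4) ^ s) by (apply pow_lt; lra).
  set (g := sawtooth u s) in *.
  assert (0 <= g * (1 - g) <= 1/4) by (pose proof (Rle_0_sqr (g - 1/2)); unfold Rsqr in *; nra).
  split; nra.
Qed.

Definition polar_arg (p z : R) (j : nat) : R :=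
  match j with O => (p + z) / 2 | 1 => p / 2 | _ => z / 2 end.

Lemma polar_arg_range p z j : 0 <= p <= 1 -> 0 <= z <= 1 -> 0 <= polar_arg p z j <= 1.
Proof. intros; destruct j as [|[|j]]; simpl; lra. Qed.

Lemma polar_mul_err p z s : 0 <= p <= 1 -> 0 <= z <= 1 ->
  Rabs (2 * sq_approx (polar_arg p z 0) s - 2 * sq_approx (polar_arg p z 1) s
        - 2 * sq_approx (polar_arg p z 2) s - p * z) <= (/4) ^ s.
Proof.
  intros Hp Hz.
  pose proof (sq_approx_err _ s (polar_arg_range p z 0 Hp Hz)) as E0.
  pose proof (sq_approx_err _ s (polar_arg_range p z 1 Hp Hz)) as E1.
  pose proof (sq_approx_err _ s (polar_arg_range p z 2 Hp Hz)) as E2.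
  simpl polar_arg in *; apply Rabs_le; lra.
Qed.

Definition clamp01 (v : R) : R := relu v - relu (v - 1).

Lemma clamp01_spec v t : 0 <= t <= 1 ->
  0 <= clamp01 v <= 1 /\ Rabs (clamp01 v - t) <= Rabs (v - t).
Proof.
  intros Ht; unfold clamp01.
  destruct (Rle_lt_dec v 0); [|destruct (Rle_lt_dec v 1)].
  - rewrite (relu_of_nonpos v), (relu_of_nonpos (v - 1)) by lra.
    split; [lra|]; rewrite !Rabs_left1 by lra; lra.
  - rewrite (relu_of_nonneg v), (relu_of_nonpos (v - 1)) by lra.
    split; [lra|]; rewrite Rminus_0_r; lra.
  - rewrite (relu_of_nonneg v), (relu_of_nonneg (v - 1)) by lra.
    split; [lra|]; rewrite !Rabs_pos_eq by lra; lra.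
Qed.

Lemma clamp01_mul_err v p z P : 0 <= p <= 1 -> 0 <= z <= 1 ->
  Rabs (clamp01 v - P * z) <= Rabs (v - p * z) + Rabs (p - P).
Proof.
  intros Hp Hz.
  assert (Hpz : 0 <= p * z <= 1) by (split; nra).
  destruct (clamp01_spec v (p * z) Hpz) as [_ Herr].
  replace (clamp01 v - P * z) with ((clamp01 v - p * z) + (p - P) * z) by ring.
  eapply Rle_trans; [apply Rabs_triang|]; rewrite Rabs_mult, (Rabs_pos_eq z) by lra.
  pose proof (Rabs_pos (p - P)); nra.
Qed.

Ltac decide_nat_tests :=
  repeat match goal with
  | |- context [Nat.ltb ?a ?b] => destruct (Nat.ltb_spec a b); try (exfalso; lia)
  | |- context [Nat.leb ?a ?b] => destruct (Nat.leb_spec a b); try (exfalso; lia)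
  | |- context [Nat.eqb ?a ?b] => destruct (Nat.eqb_spec a b); try (exfalso; lia)
  end; cbn [andb orb].

(* Hidden neurons: [i < K] carry the factors, [K] and [K + 1] hold [relu v] and
   [relu (v - 1)] so that their difference is the clamped running product, and
   [K + 2], ..., [K + 10] run the three squaring iterations (see [squaring_state]). *)
Definition polar_row (K q j : nat) : sform :=
  match j with
  | O => [(1/2, K); (-1/2, (K + 1)%nat); (1/2, q)]
  | 1 => [(1/2, K); (-1/2, (K + 1)%nat)]
  | _ => [(1/2, q)]
  end.

Definition split_row (K q i : nat) : sform :=
  if i <? K + 2 then []
  else if i <? K + 5 then polar_row K q (i - (K + 2))
  else if i <? K + 8 then polar_row K q (i - (K + 5))
  else if i <? K + 11 then polar_row K q (i - (K + 8))
  else [].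

Definition square_row (K r i : nat) : sform :=
  if i <? K + 2 then []
  else if i <? K + 5 then [(1, i); (-2 * (/4) ^ r, (i + 3)%nat); (4 * (/4) ^ r, (i + 6)%nat)]
  else if i <? K + 8 then [(2, i); (-4, (i + 3)%nat)]
  else if i <? K + 11 then [(2, (i - 3)%nat); (-4, i)]
  else [].

Definition clamp_row (K i : nat) : sform :=
  if ((i =? K) || (i =? K + 1))%bool then [(2, (K + 2)%nat); (-2, (K + 3)%nat); (-2, (K + 4)%nat)]
  else [].

Definition block_row (K m q r i : nat) : sform :=
  if i <? K then [(1, i)]
  else if r =? 0 then split_row K q i
  else if r <=? m then square_row K r i
  else clamp_row K i.

Definition block_bias (K m r i : nat) : R :=
  if r <=? m then (if ((K + 8 <=? i) && (i <? K + 11))%bool then -1/2 else 0)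
  else if i =? K + 1 then -1 else 0.

Fixpoint prodn (n : nat) (f : nat -> R) : R :=
  match n with O => 1 | S k => prodn k f * f k end.

Section Block.

Variables K m : nat.

Definition block_layer (q r : nat) (hv hv' : nat -> R) : Prop :=
  forall i, hv' i = sparse_layer (block_row K m q r) (block_bias K m r) hv i.

Definition carries (F hv : nat -> R) : Prop := forall i, (i < K)%nat -> hv i = F i.

Definition readout (hv : nat -> R) : R := hv K - hv (K + 1)%nat.

Definition squaring_state (u : nat -> R) (s : nat) (hv : nat -> R) : Prop :=
  forall j, (j < 3)%nat ->
    hv (K + 2 + j)%nat = sq_approx (u j) s /\
    hv (K + 5 + j)%nat = relu (sawtooth (u j) s) /\
    hv (K + 8 + j)%nat = relu (sawtooth (u j) s - 1/2).

Lemma carries_block_layer q r F hv hv' : (forall i, 0 <= F i) ->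
  carries F hv -> block_layer q r hv hv' -> carries F hv'.
Proof.
  intros HF Hc Hl i Hi; rewrite Hl; unfold sparse_layer, block_row, block_bias.
  decide_nat_tests; simpl; rewrite Hc, relu_of_nonneg by (auto; specialize (HF i); lra); ring.
Qed.

Lemma sform_eval_polar_row q j hv :
  sform_eval (polar_row K q j) hv = polar_arg (readout hv) (hv q) j.
Proof. unfold readout; destruct j as [|[|j]]; simpl; field. Qed.

Lemma block_bias_lanes r j : (r <= m)%nat -> (j < 3)%nat ->
  block_bias K m r (K + 2 + j) = 0 /\ block_bias K m r (K + 5 + j) = 0 /\
  block_bias K m r (K + 8 + j) = -1/2.
Proof. intros; unfold block_bias; decide_nat_tests; auto. Qed.

Lemma block_row_split q j : (j < 3)%nat ->
  block_row K m q 0 (K + 2 + j) = polar_row K q j /\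
  block_row K m q 0 (K + 5 + j) = polar_row K q j /\
  block_row K m q 0 (K + 8 + j) = polar_row K q j.
Proof. intros; unfold block_row, split_row; decide_nat_tests; repeat split; f_equal; lia. Qed.

Lemma split_layer_state q hv hv' :
  0 <= readout hv <= 1 -> 0 <= hv q <= 1 -> block_layer q 0 hv hv' ->
  squaring_state (polar_arg (readout hv) (hv q)) 0 hv'.
Proof.
  intros Hp Hz Hl j Hj; rewrite !Hl; unfold sparse_layer.
  destruct (block_row_split q j Hj) as (-> & -> & ->).
  destruct (block_bias_lanes 0 j ltac:(lia) Hj) as (-> & -> & ->).
  rewrite sform_eval_polar_row, Rplus_0_r; simpl.
  pose proof (polar_arg_range _ _ j Hp Hz).
  repeat split; [apply relu_of_nonneg; lra | apply (f_equal relu); lra].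
Qed.

Lemma block_row_square q r j : (1 <= r <= m)%nat -> (j < 3)%nat ->
  block_row K m q r (K + 2 + j) =
    [(1, (K + 2 + j)%nat); (-2 * (/4) ^ r, (K + 5 + j)%nat); (4 * (/4) ^ r, (K + 8 + j)%nat)] /\
  block_row K m q r (K + 5 + j) = [(2, (K + 5 + j)%nat); (-4, (K + 8 + j)%nat)] /\
  block_row K m q r (K + 8 + j) = [(2, (K + 5 + j)%nat); (-4, (K + 8 + j)%nat)].
Proof.
  intros; unfold block_row, square_row; decide_nat_tests.
  replace (K + 2 + j + 3)%nat with (K + 5 + j)%nat by lia.
  replace (K + 2 + j + 6)%nat with (K + 8 + j)%nat by lia.
  replace (K + 5 + j + 3)%nat with (K + 8 + j)%nat by lia.
  replace (K + 8 + j - 3)%nat with (K + 5 + j)%nat by lia.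
  repeat split.
Qed.

Lemma square_layer_state q s u hv hv' : (S s <= m)%nat ->
  (forall j, (j < 3)%nat -> 0 <= u j <= 1) ->
  squaring_state u s hv -> block_layer q (S s) hv hv' -> squaring_state u (S s) hv'.
Proof.
  intros Hs Hu Hst Hl j Hj; rewrite !Hl; unfold sparse_layer.
  destruct (block_row_square q (S s) j ltac:(lia) Hj) as (-> & -> & ->).
  destruct (block_bias_lanes (S s) j Hs Hj) as (-> & -> & ->).
  destruct (Hst j Hj) as (Ha & Hg & Ht); simpl sform_eval; rewrite Ha, Hg, Ht.
  pose proof (sq_approx_err _ (S s) (Hu j Hj)).
  pose proof (Rle_0_sqr (u j)); unfold Rsqr in *.
  repeat split; [rewrite <- (relu_of_nonneg (sq_approx (u j) (S s))) by lra | |];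
    apply (f_equal relu); simpl; unfold hat; field.
Qed.

Lemma clamp_layer_readout q u hv hv' :
  squaring_state u m hv -> block_layer q (m + 1) hv hv' ->
  readout hv' = clamp01 (2 * sq_approx (u 0%nat) m - 2 * sq_approx (u 1%nat) m
                         - 2 * sq_approx (u 2%nat) m).
Proof.
  intros Hst Hl; unfold readout, clamp01; rewrite !Hl; unfold sparse_layer.
  destruct (Hst 0%nat) as (H0 & _); [lia|].
  destruct (Hst 1%nat) as (H1 & _); [lia|].
  destruct (Hst 2%nat) as (H2 & _); [lia|].
  rewrite Nat.add_0_r in H0.
  replace (K + 2 + 1)%nat with (K + 3)%nat in H1 by lia.
  replace (K + 2 + 2)%nat with (K + 4)%nat in H2 by lia.
  unfold block_row, clamp_row, block_bias; decide_nat_tests; simpl.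
  rewrite H0, H1, H2; f_equal; apply (f_equal relu); lra.
Qed.

Definition block_inv (F : nat -> R) (b : nat) (hv : nat -> R) : Prop :=
  carries F hv /\ 0 <= readout hv <= 1 /\
  Rabs (readout hv - prodn (S b) F) <= INR b * (/4) ^ m.

Lemma block_squaring F q (st : nat -> nat -> R) :
  (forall i, 0 <= F i <= 1) -> (q < K)%nat ->
  (forall r, (r < m + 2)%nat -> block_layer q r (st r) (st (S r))) ->
  carries F (st 0%nat) -> 0 <= readout (st 0%nat) <= 1 ->
  forall s, (s <= m)%nat ->
    carries F (st (S s)) /\ squaring_state (polar_arg (readout (st 0%nat)) (F q)) s (st (S s)).
Proof.
  intros HF Hq Hl Hc Hp.
  assert (HF0 : forall i, 0 <= F i) by (intros i; apply HF).
  induction s as [|s IH]; intros Hs.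
  - split; [apply (carries_block_layer q 0 F (st 0%nat)); auto; apply Hl; lia|].
    rewrite <- (Hc q Hq).
    apply split_layer_state; [exact Hp | rewrite Hc; auto | apply Hl; lia].
  - destruct IH as [IHc IHs]; [lia|]; split.
    + apply (carries_block_layer q (S s) F (st (S s))); auto; apply Hl; lia.
    + apply (square_layer_state q s _ (st (S s))); auto; [|apply Hl; lia].
      intros j _; apply polar_arg_range; auto.
Qed.

Lemma block_inv_succ F b (st : nat -> nat -> R) :
  (forall i, 0 <= F i <= 1) -> (S b < K)%nat ->
  (forall r, (r < m + 2)%nat -> block_layer (S b) r (st r) (st (S r))) ->
  block_inv F b (st 0%nat) -> block_inv F (S b) (st (m + 2)%nat).
Proof.
  intros HF Hb Hl (Hc & Hp & He).
  destruct (block_squaring F (S b) st HF Hb Hl Hc Hp m (le_n m)) as [Hcm Hsm].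
  set (p := readout (st 0%nat)) in *; set (z := F (S b)) in *.
  assert (Hz : 0 <= z <= 1) by apply HF.
  assert (Hlast : block_layer (S b) (m + 1) (st (S m)) (st (m + 2)%nat)).
  { replace (m + 2)%nat with (S (m + 1)) by lia; replace (S m) with (m + 1)%nat by lia.
    apply Hl; lia. }
  set (v := 2 * sq_approx (polar_arg p z 0) m - 2 * sq_approx (polar_arg p z 1) m
            - 2 * sq_approx (polar_arg p z 2) m).
  assert (Hread : readout (st (m + 2)%nat) = clamp01 v) by (eapply clamp_layer_readout; eauto).
  split; [eapply carries_block_layer; eauto; intros i; apply HF|].
  rewrite Hread; split.
  - apply (clamp01_spec v (p * z)); split; nra.
  - change (prodn (S (S b)) F) with (prodn (S b) F * z).
    pose proof (polar_mul_err p z m Hp Hz) as Hv; fold v in Hv.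
    pose proof (clamp01_mul_err v p z (prodn (S b) F) Hp Hz).
    rewrite S_INR; lra.
Qed.

End Block.

Definition input_row (K : nat) (sg : nat -> nat) (i : nat) : sform :=
  if i <? K then [(1, sg i)] else if i =? K then [(1, sg 0%nat)] else [].

Definition output_row (K : nat) : sform := [(1, K); (-1, (K + 1)%nat)].

Definition depth (K m : nat) : nat := 2 + (K - 1) * (m + 2).

(* Layer [2 + b * (m + 2) + r] is phase [r] of the block multiplying by factor [b + 1].
   The [Nat.min] changes nothing below the output layer; it keeps the rows of the unused
   layers beyond it within the input width. *)
Definition net_row (K m : nat) (sg : nat -> nat) (l i : nat) : sform :=
  if l =? 1 then input_row K sg i
  else if l =? depth K m then output_row K
  else block_row K m (Nat.min ((l - 2) / (m + 2) + 1) (K - 1)) ((l - 2) mod (m + 2)) i.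

Definition net_bias (K m l i : nat) : R :=
  if ((l =? 1) || (l =? depth K m))%bool then 0
  else block_bias K m ((l - 2) mod (m + 2)) i.

Lemma net_weight_bound K m sg l i :
  Rabs (net_bias K m l i) <= 7 /\ sform_norm1 (net_row K m sg l i) <= 7.
Proof.
  assert (Hq : forall r, 0 < (/4) ^ r <= 1).
  { intros r; split; [apply pow_lt; lra | rewrite <- (pow1 r); apply pow_incr; lra]. }
  pose proof (Hq ((l - 2) mod (m + 2))%nat).
  unfold net_bias, net_row, input_row, output_row, block_bias, block_row,
    split_row, square_row, clamp_row.
  split; repeat match goal with
  | |- context [Nat.ltb ?a ?b] => destruct (Nat.ltb a b)
  | |- context [Nat.leb ?a ?b] => destruct (Nat.leb a b)
  | |- context [Nat.eqb ?a ?b] => destruct (Nat.eqb a b)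
  | |- context [polar_row _ _ ?j] => destruct j as [|[|?]]; unfold polar_row
  end; cbn [andb orb sform_norm1 fold_right fst snd];
  unfold Rabs; repeat destruct Rcase_abs; lra.
Qed.

Lemma net_row_support d W K m sg : (1 <= K)%nat -> (K + 11 <= W)%nat ->
  (forall i, (sg i < d)%nat) ->
  forall l i t, In t (net_row K m sg l i) -> (snd t < in_dim d W l)%nat.
Proof.
  intros HK HW Hsg l i t Hin; unfold in_dim.
  pose proof (Nat.le_min_r ((l - 2) / (m + 2) + 1) (K - 1)).
  revert Hin; unfold net_row, input_row, output_row, block_row,
    split_row, square_row, clamp_row.
  decide_nat_tests; intros Hin;
  repeat match goal with
  | H : In _ (polar_row _ _ ?j) |- _ => destruct j as [|[|?]]; unfold polar_row in H
  | H : In _ [] |- _ => destruct H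
  | H : In _ (_ :: _) |- _ => destruct H as [<-|H]
  end; simpl; auto; lia.
Qed.

Section Net.

Variables (d W K m : nat) (sg : nat -> nat) (x : nat -> R).
Hypothesis HK : (1 <= K)%nat.
Hypothesis HW : (K + 11 <= W)%nat.
Hypothesis Hsg : forall i, (sg i < d)%nat.
Hypothesis Hx : forall i, 0 <= x (sg i) <= 1.

Let F i := x (sg i).
Let wt l i j := sform_coef (net_row K m sg l i) j.
Let h := hidden d W wt (net_bias K m) x.

Lemma net_hidden_succ l i :
  h (S l) i = sparse_layer (net_row K m sg (S l)) (net_bias K m (S l)) (h l) i.
Proof. apply hidden_succ, net_row_support; auto; lia. Qed.

Lemma net_block_layer b r : (S b < K)%nat -> (r < m + 2)%nat ->
  block_layer K m (S b) r (h (1 + b * (m + 2) + r)%nat) (h (2 + b * (m + 2) + r)%nat).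
Proof.
  intros Hb Hr i.
  replace (2 + b * (m + 2) + r)%nat with (S (1 + b * (m + 2) + r)) by lia.
  rewrite net_hidden_succ.
  assert (Hl : ((2 + b * (m + 2) + r) - 2 = r + b * (m + 2))%nat) by lia.
  assert (Hdepth : (b * (m + 2) + r < (K - 1) * (m + 2))%nat).
  { assert ((S b) * (m + 2) <= (K - 1) * (m + 2))%nat by (apply Nat.mul_le_mono_r; lia). lia. }
  unfold sparse_layer, net_row, net_bias, depth.
  replace (S (1 + b * (m + 2) + r)) with (2 + b * (m + 2) + r)%nat by lia.
  rewrite Hl, Nat.div_add, Nat.Div0.mod_add, Nat.div_small, Nat.mod_small by lia.
  decide_nat_tests; replace (Nat.min (0 + b + 1) (K - 1)) with (S b) by lia; reflexivity.
Qed.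

Lemma net_input_inv : block_inv K m F 0 (h 1%nat).
Proof.
  assert (Hin : forall i, h 1%nat i = relu (sform_eval (input_row K sg i) x)).
  { intros i; rewrite net_hidden_succ; unfold sparse_layer, net_row, net_bias.
    decide_nat_tests; rewrite Rplus_0_r; reflexivity. }
  assert (Hc : carries K F (h 1%nat)).
  { intros i Hi; rewrite Hin; unfold input_row; decide_nat_tests; simpl.
    rewrite Rplus_0_r, Rmult_1_l; apply relu_of_nonneg, Hx. }
  assert (Hr : readout K (h 1%nat) = F 0%nat).
  { unfold readout; rewrite !Hin; unfold input_row; decide_nat_tests; simpl.
    rewrite Rplus_0_r, Rmult_1_l, relu_of_nonneg, relu_of_nonneg by (try apply Hx; lra).
    unfold F; ring. }
  split; [exact Hc|]; rewrite Hr; split; [apply Hx|].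
  simpl; rewrite Rmult_1_l, Rminus_diag, Rabs_R0; lra.
Qed.

Lemma net_block_inv b : (b <= K - 1)%nat -> block_inv K m F b (h (1 + b * (m + 2))%nat).
Proof.
  induction b as [|b IH]; intros Hb; [exact net_input_inv|].
  replace (1 + S b * (m + 2))%nat with (1 + b * (m + 2) + (m + 2))%nat by lia.
  apply (block_inv_succ K m F b (fun r => h (1 + b * (m + 2) + r)%nat)); [apply Hx | lia | |].
  - intros r Hr; replace (1 + b * (m + 2) + S r)%nat with (2 + b * (m + 2) + r)%nat by lia.
    apply net_block_layer; lia.
  - rewrite Nat.add_0_r; apply IH; lia.
Qed.

Lemma net_error :
  Rabs (realize d W (depth K m) wt (net_bias K m) x - prodn K F) <= INR (K - 1) * (/4) ^ m.
Proof.
  destruct (net_block_inv (K - 1) (le_n _)) as (_ & _ & He).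
  replace (S (K - 1)) with K in He by lia.
  unfold wt; rewrite realize_sparse by (apply net_row_support; auto; lia).
  replace (depth K m - 1)%nat with (1 + (K - 1) * (m + 2))%nat
    by (unfold depth; nia).
  assert (Hd1 : (depth K m =? 1) = false)
    by (apply Nat.eqb_neq; unfold depth; nia).
  assert (Hrow : net_row K m sg (depth K m) 0 = output_row K)
    by (unfold net_row; rewrite Hd1, Nat.eqb_refl; reflexivity).
  assert (Hbias : net_bias K m (depth K m) 0 = 0)
    by (unfold net_bias; rewrite Hd1, Nat.eqb_refl; reflexivity).
  rewrite Hrow, Hbias; fold wt h; unfold readout in He.
  unfold output_row, sform_eval; cbn [fold_right fst snd].
  eapply Rle_trans; [right | exact He]; apply (f_equal Rabs); ring.
Qed.

End Net.

Fixpoint factor_indices (n : nat) (alpha : nat -> nat) : list nat :=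
  match n with O => [] | S k => factor_indices k alpha ++ repeat k (alpha k) end.

Lemma factor_indices_length n alpha : length (factor_indices n alpha) = nsum n alpha.
Proof. induction n as [|n IH]; simpl; [reflexivity|]; rewrite length_app, repeat_length; lia. Qed.

Lemma factor_indices_lt n alpha j : In j (factor_indices n alpha) -> (j < n)%nat.
Proof.
  induction n as [|n IH]; simpl; intros Hj; [destruct Hj|].
  apply in_app_or in Hj as [Hj|Hj]; [apply IH in Hj | apply repeat_spec in Hj]; lia.
Qed.

Lemma prodn_ext n f g : (forall j, (j < n)%nat -> f j = g j) -> prodn n f = prodn n g.
Proof.
  induction n as [|n IH]; intros Hfg; simpl; [reflexivity|].
  rewrite IH, Hfg; [reflexivity | lia | intros; apply Hfg; lia].
Qed.

Lemma prodn_add a b f : prodn (a + b) f = prodn a f * prodn b (fun j => f (a + j)%nat).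
Proof.
  induction b as [|b IH]; simpl; [rewrite Nat.add_0_r; ring|].
  rewrite Nat.add_succ_r; simpl; rewrite IH; ring.
Qed.

Lemma prodn_const n c : prodn n (fun _ => c) = c ^ n.
Proof. induction n as [|n IH]; simpl; [|rewrite IH]; ring. Qed.

Lemma monomial_prodn n alpha x :
  monomial n alpha x = prodn (nsum n alpha) (fun j => x (nth j (factor_indices n alpha) 0%nat)).
Proof.
  induction n as [|n IH]; simpl; [reflexivity|].
  rewrite prodn_add, IH; f_equal.
  - apply prodn_ext; intros j Hj.
    rewrite app_nth1 by (rewrite factor_indices_length; lia); reflexivity.
  - rewrite <- prodn_const; apply prodn_ext; intros j Hj.
    rewrite app_nth2, factor_indices_length, nth_repeat_lt by (rewrite ?factor_indices_length; lia).
    f_equal; lia.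
Qed.

Lemma nth_factor_indices_lt n alpha j :
  (1 <= n)%nat -> (nth j (factor_indices n alpha) 0%nat < n)%nat.
Proof.
  intros Hn; destruct (Nat.lt_ge_cases j (length (factor_indices n alpha))).
  - apply (factor_indices_lt n alpha), nth_In; assumption.
  - rewrite nth_overflow by assumption; lia.
Qed.

Lemma ln_nonneg y : 1 <= y -> 0 <= ln y.
Proof.
  intros Hy; destruct (Rle_lt_or_eq_dec _ _ Hy) as [Hlt | <-].
  - rewrite <- ln_1; left; apply ln_increasing; lra.
  - rewrite ln_1; lra.
Qed.

Lemma nat_ceil t : exists m : nat, t <= INR m <= Rmax 0 (t + 1).
Proof.
  destruct (archimed t) as [Hup1 Hup2]; destruct (Z_le_gt_dec 0 (up t)) as [Hpos|Hneg].
  - exists (Z.to_nat (up t)); rewrite INR_IZR_INZ, Z2Nat.id by assumption.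
    split; [lra|]; eapply Rle_trans; [|apply Rmax_r]; lra.
  - exists 0%nat; assert (IZR (up t) <= -1) by (apply IZR_le; lia).
    simpl; split; [lra | apply Rmax_l].
Qed.

Lemma le_pow4_of_ln_le y m : 0 < y -> ln y <= INR m -> y <= 4 ^ m.
Proof.
  intros Hy Hm; destruct (Rle_lt_dec y (4 ^ m)) as [Hle | Hlt]; [exact Hle | exfalso].
  apply ln_increasing in Hlt; [|apply pow_lt; lra].
  rewrite ln_pow in Hlt by lra.
  assert (Hln4 : 1 < ln 4).
  { replace 4 with (2 * 2) by ring; rewrite ln_mult by lra; pose proof ln_lt_2; lra. }
  pose proof (pos_INR m); nra.
Qed.

Lemma total_error_le K m eps : (1 <= K)%nat -> 0 < eps -> ln (INR K / eps) <= INR m ->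
  INR (K - 1) * (/4) ^ m <= eps.
Proof.
  intros HK Heps Hm.
  assert (HKr : 1 <= INR K) by (apply (le_INR 1); assumption).
  assert (Hy : 0 < INR K / eps) by (apply Rdiv_lt_0_compat; lra).
  pose proof (le_pow4_of_ln_le _ _ Hy Hm) as H4.
  assert (Hq : 0 < 4 ^ m) by (apply pow_lt; lra).
  rewrite minus_INR, pow_inv by assumption; simpl INR.
  apply Rmult_le_reg_r with (4 ^ m); [exact Hq|].
  rewrite Rmult_assoc, Rinv_l by lra.
  apply Rmult_le_compat_r with (r := eps) in H4; [|lra].
  unfold Rdiv in H4; rewrite Rmult_assoc, Rinv_l in H4 by lra; lra.
Qed.

Lemma depth_le K m eps M : (2 <= K)%nat -> 0 < eps -> 1 <= M -> ln (/ eps) <= M ->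
  INR m <= Rmax 0 (ln (INR K / eps) + 1) ->
  INR (depth K m) <= (2 + (INR K - 1) * (ln (INR K) + 4)) * M.
Proof.
  intros HK Heps HM Heps_M Hm.
  assert (HKr : 2 <= INR K) by (apply (le_INR 2); assumption).
  assert (HlnK : 0 <= ln (INR K)) by (apply ln_nonneg; lra).
  assert (Hm' : INR m <= ln (INR K) + M + 1).
  { eapply Rle_trans; [exact Hm|]; apply Rmax_lub; [lra|].
    unfold Rdiv; rewrite ln_mult by (try apply Rinv_0_lt_compat; lra); lra. }
  unfold depth; rewrite plus_INR, mult_INR, plus_INR, minus_INR by lia; simpl INR.
  assert (0 <= (INR K - 1) * ((ln (INR K) + 3) * (M - 1)))
    by (apply Rmult_le_pos; [|apply Rmult_le_pos]; lra).
  assert ((INR K - 1) * (INR m + 2) <= (INR K - 1) * (ln (INR K) + M + 3))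
    by (apply Rmult_le_compat_l; lra).
  nra.
Qed.

Lemma width_enough K : (2 <= K)%nat -> (K + 11 <= 21 * 2 ^ (Nat.log2_up K - 1))%nat.
Proof.
  intros HK; destruct (Nat.log2_up_spec K) as [_ Hup]; [lia|].
  assert (Ha : (1 <= Nat.log2_up K)%nat) by (apply Nat.log2_up_pos; lia).
  replace (Nat.log2_up K) with (S (Nat.log2_up K - 1)) in Hup by lia.
  rewrite Nat.pow_succ_r' in Hup; pose proof (Nat.pow_nonzero 2 (Nat.log2_up K - 1)); lia.
Qed.

Lemma ln_inv_le_scale a eps : (1 <= a)%nat -> 0 < eps ->
  ln (/ eps) <= Rmax 1 (ln ((3 ^ a - 1) / (2 * eps))).
Proof.
  intros Ha Heps.
  assert (H3 : 3 <= 3 ^ a) by (rewrite <- pow_1 at 1; apply Rle_pow; [lra | assumption]).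
  eapply Rle_trans; [|apply Rmax_r].
  replace ((3 ^ a - 1) / (2 * eps)) with ((3 ^ a - 1) / 2 * / eps) by (field; lra).
  rewrite ln_mult by (try apply Rinv_0_lt_compat; lra).
  pose proof (ln_nonneg ((3 ^ a - 1) / 2) ltac:(lra)); lra.
Qed.

Theorem lemma9 (d s : nat) (alpha : nat -> nat)
  (hd : (1 <= d)%nat) (hs : (1 <= s)%nat) (habar : (2 <= nsum d alpha)%nat) :
  let a := Nat.log2_up (nsum d alpha) in
  exists C : R, 0 < C /\
    forall eps : R, eps_admissible a eps ->
      exists (L : nat) (wt : nat -> nat -> nat -> R) (bs : nat -> nat -> R),
        (1 <= L)%nat /\
        INR L <= C * Rmax 1 (ln ((3 ^ a - 1) / (2 * eps))) /\
        weight_bounded d (21 * 2 ^ (a - 1)) L wt bs C /\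
        forall x : nat -> R, (forall i, (i < d)%nat -> 0 <= x i <= 1) ->
          Rabs (realize d (21 * 2 ^ (a - 1)) L wt bs x - monomial d alpha x) <= eps.
Proof.
  intros a; set (K := nsum d alpha) in *.
  set (sg j := nth j (factor_indices d alpha) 0%nat).
  assert (Hsg : forall j, (sg j < d)%nat) by (intros; apply nth_factor_indices_lt, hd).
  exists (Rmax 7 (2 + (INR K - 1) * (ln (INR K) + 4))).
  split; [eapply Rlt_le_trans; [|apply Rmax_l]; lra|].
  intros eps [Heps _].
  destruct (nat_ceil (ln (INR K / eps))) as (m & Hm_lo & Hm_hi).
  exists (depth K m), (fun l i j => sform_coef (net_row K m sg l i) j), (net_bias K m).
  split; [unfold depth; nia|].
  split; [|split].
  - set (M := Rmax 1 (ln ((3 ^ a - 1) / (2 * eps)))).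
    apply Rle_trans with ((2 + (INR K - 1) * (ln (INR K) + 4)) * M).
    + apply (depth_le K m eps M habar Heps (Rmax_l _ _)); [|exact Hm_hi].
      apply ln_inv_le_scale; [apply Nat.log2_up_pos; lia | exact Heps].
    + apply Rmult_le_compat_r; [apply Rle_trans with 1; [lra | apply Rmax_l] | apply Rmax_r].
  - apply weight_bounded_sparse; intros l i.
    destruct (net_weight_bound K m sg l i); split; (eapply Rle_trans; [eassumption | apply Rmax_l]).
  - intros x Hx; rewrite monomial_prodn; fold K; fold sg.
    apply Rle_trans with (INR (K - 1) * (/4) ^ m).
    + apply net_error; [lia | apply width_enough, habar | exact Hsg | intros i; apply Hx, Hsg].
    + apply total_error_le; [lia | exact Heps | exact Hm_lo].
Qed.
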